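(* Let $S=(X,\prec,\sqsubset)$ be an so-structure. Then the quotient structure $S/{\equiv_\sqsubset}:=\bigl(X/{\equiv_\sqsubset},\hat\prec,\hat\sqsubset\bigr)$ is an so-structure, both $\hat\prec$ and $\hat\sqsubset$ are partial orders on $X/{\equiv_\sqsubset}$, and for all $\alpha,\beta\in X$: (1) $\alpha\prec\beta \iff [\alpha]\,\hat\prec\,[\beta]$; (2) $\alpha\sqsubset\beta \iff [\alpha]\,\hat\sqsubset\,[\beta]\ \vee\ (\alpha\neq\beta\wedge[\alpha]=[\beta])$.
   Context: A stratified order structure (so-structure) is a triple $S=(X,\prec,\sqsubset)$ with $\prec,\sqsubset\subseteq X\times X$ such that for all $\alpha,\beta,\gamma\in X$: (S1) $\neg(\alpha\sqsubset\alpha)$; (S2) $\alpha\prec\beta\Rightarrow\alpha\sqsubset\beta$; (S3) $\alpha\sqsubset\beta\sqsubset\gamma\wedge\alpha\neq\gamma\Rightarrow\alpha\sqsubset\gamma$; (S4) $(\alpha\sqsubset\beta\wedge\beta\prec\gamma)\vee(\alpha\prec\beta\wedge\beta\sqsubset\gamma)\Rightarrow\alpha\prec\gamma$. For an so-structure, define $\alpha\equiv_\sqsubset\beta$ iff $\alpha=\beta$ or ($\alpha\sqsubset\beta$ and $\beta\sqsubset\alpha$); this is an equivalence relation on $X$, $[\alpha]$ denotes the class of $\alpha$, and $X/{\equiv_\sqsubset}$ the set of classes. On $X/{\equiv_\sqsubset}$ define $[\alpha]\,\hat\prec\,[\beta]$ iff $[\alpha]\neq[\beta]$ and $([\alpha]\times[\beta])\cap\prec\neq\emptyset$,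 and $[\alpha]\,\hat\sqsubset\,[\beta]$ iff $[\alpha]\neq[\beta]$ and $([\alpha]\times[\beta])\cap\sqsubset\neq\emptyset$. *)

Set Implicit Arguments.

Section SO.
Variable X : Type.

Definition so_structure (prec sqsub : X -> X -> Prop) : Prop :=
  (forall a, ~ sqsub a a) /\
  (forall a b, prec a b -> sqsub a b) /\
  (forall a b c, sqsub a b -> sqsub b c -> a <> c -> sqsub a c) /\
  (forall a b c, (sqsub a b /\ prec b c) \/ (prec a b /\ sqsub b c) -> prec a c).

Definition partial_order (T : Type) (R : T -> T -> Prop) : Prop :=
  (forall x, ~ R x x) /\ (forall x y z, R x y -> R y z -> R x z).

Variable sqsub : X -> X -> Prop.

Definition sq_equiv (a b : X) : Prop := a = b \/ (sqsub a b /\ sqsub b a).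

Definition sq_class (a : X) : X -> Prop := fun b => sq_equiv a b.

Definition quot : Type := { C : X -> Prop | exists a, C = sq_class a }.

Definition class_of (a : X) : quot :=
  exist (fun C => exists a', C = sq_class a') (sq_class a) (ex_intro _ a eq_refl).

Definition hat (R : X -> X -> Prop) (C D : quot) : Prop :=
  C <> D /\ exists a b, proj1_sig C a /\ proj1_sig D b /\ R a b.

End SO.
Arguments hat {X} sqsub R C D.
Arguments class_of {X} sqsub a.

(* Since [hat] only compares distinct classes, [prec] and [sqsub] between
   inequivalent elements are invariant under replacing either element by an
   equivalent one ((S3) and (S4) absorb the extra [sqsub] steps).  Hence on
   classes of inequivalent elements [hat prec] is [prec] and [hat sqsub] is
   [sqsub]; the axioms transfer, and (S3) even becomes plain transitivity,
   because [a sqsub b sqsub a] would put [a] and [b] in one class. *)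
From Stdlib Require Import ProofIrrelevance FunctionalExtensionality PropExtensionality Classical.
Set Implicit Arguments.

Section Quotient.
Variable X : Type.
Variables prec sqsub : X -> X -> Prop.
Hypothesis HS : so_structure prec sqsub.

Local Notation equiv := (sq_equiv sqsub).
Local Notation cls := (class_of sqsub).

Lemma sqsub_irrefl a : ~ sqsub a a.
Proof. exact (proj1 HS a). Qed.

Lemma prec_sqsub a b : prec a b -> sqsub a b.
Proof. exact (proj1 (proj2 HS) a b). Qed.

Lemma sqsub_trans a b c : sqsub a b -> sqsub b c -> a <> c -> sqsub a c.
Proof. exact (proj1 (proj2 (proj2 HS)) a b c). Qed.

Lemma sqsub_prec_trans a b c : sqsub a b -> prec b c -> prec a c.
Proof. intros h1 h2. apply (proj2 (proj2 (proj2 HS)) a b c); left; auto. Qed.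

Lemma prec_sqsub_trans a b c : prec a b -> sqsub b c -> prec a c.
Proof. intros h1 h2. apply (proj2 (proj2 (proj2 HS)) a b c); right; auto. Qed.

Lemma equiv_refl a : equiv a a.
Proof. left; reflexivity. Qed.

Lemma equiv_sym a b : equiv a b -> equiv b a.
Proof. intros [->|[h1 h2]]; [left|right]; auto. Qed.

Lemma equiv_trans a b c : equiv a b -> equiv b c -> equiv a c.
Proof.
  intros [->|[ab ba]]; auto.
  intros [<-|[bc cb]]; [right; auto|].
  destruct (classic (a = c)) as [->|ac]; [apply equiv_refl|].
  right; split; apply sqsub_trans with b; auto.
Qed.

Lemma class_of_eq a b : cls a = cls b <-> equiv a b.
Proof.
  split.
  - intro e. apply (f_equal (@proj1_sig _ _)) in e.
    change (sq_class sqsub a = sq_class sqsub b) in e.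
    change (sq_class sqsub a b). rewrite e. apply equiv_refl.
  - intro ab. apply subset_eq_compat, functional_extensionality; intro x.
    apply propositional_extensionality; unfold sq_class; split; intro h.
    + apply equiv_trans with a; auto using equiv_sym.
    + apply equiv_trans with b; auto.
Qed.

Lemma class_of_surj (C : quot sqsub) : exists a, C = cls a.
Proof.
  destruct C as [C [a ->]]. exists a. apply subset_eq_compat; reflexivity.
Qed.

Lemma hat_class_of R a b : hat sqsub R (cls a) (cls b) <->
  ~ equiv a b /\ exists x y, equiv a x /\ equiv b y /\ R x y.
Proof. unfold hat; simpl. rewrite class_of_eq. reflexivity. Qed.

Lemma hat_irrefl R C : ~ hat sqsub R C C.
Proof. intros [h _]. apply h; reflexivity. Qed.

Lemma prec_equiv_l a x y : equiv a x -> prec x y -> prec a y.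
Proof. intros [->|[ax _]] h; auto. apply sqsub_prec_trans with x; auto. Qed.

Lemma prec_equiv_r x y b : equiv y b -> prec x y -> prec x b.
Proof. intros [<-|[yb _]] h; auto. apply prec_sqsub_trans with y; auto. Qed.

Lemma sqsub_equiv_l a x y : equiv a x -> a <> y -> sqsub x y -> sqsub a y.
Proof. intros [->|[ax _]] ay h; auto. apply sqsub_trans with x; auto. Qed.

Lemma sqsub_equiv_r x y b : equiv y b -> x <> b -> sqsub x y -> sqsub x b.
Proof. intros [<-|[yb _]] xb h; auto. apply sqsub_trans with y; auto. Qed.

Lemma prec_not_equiv a b : prec a b -> ~ equiv a b.
Proof.
  intros h [<-|[_ ba]].
  - exact (sqsub_irrefl (prec_sqsub h)).
  - exact (sqsub_irrefl (prec_sqsub (prec_sqsub_trans h ba))).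
Qed.

Lemma hat_prec_class_of a b : hat sqsub prec (cls a) (cls b) <-> prec a b.
Proof.
  rewrite hat_class_of. split.
  - intros [_ [x [y [ax [byy xy]]]]].
    apply prec_equiv_r with y; [apply equiv_sym; exact byy|].
    apply prec_equiv_l with x; assumption.
  - intro h. split; [exact (prec_not_equiv h)|].
    exists a, b; auto using equiv_refl.
Qed.

Lemma hat_sqsub_class_of a b :
  hat sqsub sqsub (cls a) (cls b) <-> sqsub a b /\ ~ equiv a b.
Proof.
  rewrite hat_class_of. split.
  - intros [nab [x [y [ax [byy xy]]]]]. split; [|exact nab].
    apply sqsub_equiv_r with y; [apply equiv_sym; exact byy| |].
    + intros <-. apply nab, equiv_refl.
    + apply sqsub_equiv_l with x; [exact ax| |exact xy].
      intros <-. apply nab, equiv_sym, byy.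
  - intros [h nab]. split; [exact nab|]. exists a, b; auto using equiv_refl.
Qed.

Lemma hat_prec_sqsub C D : hat sqsub prec C D -> hat sqsub sqsub C D.
Proof.
  destruct (class_of_surj C) as [a ->], (class_of_surj D) as [b ->].
  rewrite hat_prec_class_of, hat_sqsub_class_of.
  intro h. split; [exact (prec_sqsub h)|exact (prec_not_equiv h)].
Qed.

Lemma hat_prec_trans C D E :
  hat sqsub prec C D -> hat sqsub prec D E -> hat sqsub prec C E.
Proof.
  destruct (class_of_surj C) as [a ->], (class_of_surj D) as [b ->],
    (class_of_surj E) as [c ->].
  rewrite !hat_prec_class_of. intros ab bc.
  exact (prec_sqsub_trans ab (prec_sqsub bc)).
Qed.

Lemma hat_sqsub_trans C D E :
  hat sqsub sqsub C D -> hat sqsub sqsub D E -> hat sqsub sqsub C E.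
Proof.
  destruct (class_of_surj C) as [a ->], (class_of_surj D) as [b ->],
    (class_of_surj E) as [c ->].
  rewrite !hat_sqsub_class_of. intros [ab nab] [bc nbc].
  assert (ac : a <> c) by (intros <-; apply nab; right; auto).
  split; [exact (sqsub_trans ab bc ac)|].
  intros [e|[_ ca]]; [contradiction|].
  apply nbc. right; split; [exact bc|].
  apply sqsub_trans with a; auto. intros <-. apply nbc, equiv_refl.
Qed.

Lemma hat_sqsub_prec_trans C D E :
  hat sqsub sqsub C D -> hat sqsub prec D E -> hat sqsub prec C E.
Proof.
  destruct (class_of_surj C) as [a ->], (class_of_surj D) as [b ->],
    (class_of_surj E) as [c ->].
  rewrite hat_sqsub_class_of, !hat_prec_class_of. intros [ab _].
  exact (sqsub_prec_trans ab).
Qed.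

Lemma hat_prec_sqsub_trans C D E :
  hat sqsub prec C D -> hat sqsub sqsub D E -> hat sqsub prec C E.
Proof.
  destruct (class_of_surj C) as [a ->], (class_of_surj D) as [b ->],
    (class_of_surj E) as [c ->].
  rewrite hat_sqsub_class_of, !hat_prec_class_of. intros ab [bc _].
  exact (prec_sqsub_trans ab bc).
Qed.

Lemma sqsub_split a b :
  sqsub a b <-> hat sqsub sqsub (cls a) (cls b) \/ (a <> b /\ cls a = cls b).
Proof.
  rewrite hat_sqsub_class_of, class_of_eq. split.
  - intro h. destruct (classic (equiv a b)) as [e|n]; [right|left; auto].
    split; [|exact e]. intros <-. exact (sqsub_irrefl h).
  - intros [[h _]|[ab [e|[h _]]]]; [exact h|contradiction|exact h].
Qed.

End Quotient.

Theorem mainTheorem1 (X : Type) (prec sqsub : X -> X -> Prop)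
  (HS : so_structure prec sqsub) :
  so_structure (hat sqsub prec) (hat sqsub sqsub) /\
  partial_order (hat sqsub prec) /\
  partial_order (hat sqsub sqsub) /\
  (forall a b : X, prec a b <-> hat sqsub prec (class_of sqsub a) (class_of sqsub b)) /\
  (forall a b : X, sqsub a b <->
      (hat sqsub sqsub (class_of sqsub a) (class_of sqsub b) \/
       (a <> b /\ class_of sqsub a = class_of sqsub b))).
Proof.
  split; [|split; [|split; [|split]]].
  - split; [|split; [|split]].
    + apply hat_irrefl.
    + exact (hat_prec_sqsub HS).
    + intros C D E h1 h2 _. exact (hat_sqsub_trans HS h1 h2).
    + intros C D E [[h1 h2]|[h1 h2]].
      * exact (hat_sqsub_prec_trans HS h1 h2).
      * exact (hat_prec_sqsub_trans HS h1 h2).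
  - split; [apply hat_irrefl|exact (hat_prec_trans HS)].
  - split; [apply hat_irrefl|exact (hat_sqsub_trans HS)].
  - intros a b. symmetry. exact (hat_prec_class_of HS a b).
  - exact (sqsub_split HS).
Qed.
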